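(* Let $G=(V,E)$ be a graph, $\mathcal{T}$ a neighbourhood decomposition of $G$, and $\alpha$ a local linear cardinality constraint. Let $T\in\mathcal{T}$ be a type that is nonuniform with respect to $\alpha$. Then there exist a partition $\mathcal{T}'$ of $T$ and a local linear cardinality constraint $\alpha'$ such that: 1. $|\mathcal{T}'|\le 4$; 2. $\nu_{\alpha'}\big((\mathcal{T}\setminus\{T\})\cup\mathcal{T}'\big)<\nu_\alpha(\mathcal{T})$; 3. for every $X\subseteq V$, $X$ satisfies $\alpha$ if and only if $X$ satisfies $\alpha'$.
   Context: Neighbourhood decompositions: - Two vertices $u,v$ have the same neighbourhood type if $N(u)\setminus\{v\}=N(v)\setminus\{u\}$. - A neighbourhood decomposition is a partition of $V$ into classes (''types'') of pairwise same-type vertices. - Any partition refining a neighbourhood decomposition is again one. Local linear cardinality constraints: - A local linear cardinality constraint is a map $\alpha$ assigning to each $v\in V$ an interval of integers $\alpha(v)=\{l_v,\dots,u_v\}\subseteq\{0,\dots,|V|\}$, possibly empty. - A set $X\subseteq V$ satisfies $\alpha$ if $|X\cap N(v)|\in\alpha(v)$ for all $v\in V$. Uniformity: - A type $T$ is uniform with respect to $\alpha$ if $\alpha(u)=\alpha(v)$ for all $u,v\in T$, and nonuniform otherwise. - $\nu_\alpha(\mathcal{T})$ denotes the number of types of $\mathcal{T}$ that are nonuniform with respect to $\alpha$. *)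

From mathcomp Require Import all_boot.
Set Implicit Arguments. Unset Strict Implicit. Unset Printing Implicit Defensive.

Section Defs.
Variable V : finType.

Definition simple_graph (e : rel V) := symmetric e /\ irreflexive e.

Definition nbhd (e : rel V) (v : V) : {set V} := [set w | e v w].

Definition same_type (e : rel V) (u v : V) : bool :=
  (nbhd e u :\ v) == (nbhd e v :\ u).

Definition nbhd_decomposition (e : rel V) (P : {set {set V}}) : bool :=
  partition P [set: V] &&
  [forall S in P, forall u in S, forall v in S, same_type e u v].

(* An integer interval {l,...,u} is encoded as the pair (l,u).  To make
   equality of encodings coincide with equality of intervals as sets, the
   empty interval is encoded canonically as (1,0); nonempty ones satisfy
   l <= u <= |V|. *)
Definition empty_interval : nat * nat := (1, 0).
Definition in_interval (I : nat * nat) (k : nat) : bool := I.1 <= k <= I.2.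

Definition valid_interval (I : nat * nat) : bool :=
  (I.1 <= I.2 <= #|V|) || (I == empty_interval).

Definition llc (alpha : V -> nat * nat) : bool :=
  [forall v, valid_interval (alpha v)].

Definition satisfies (e : rel V) (alpha : V -> nat * nat) (X : {set V}) : bool :=
  [forall v, in_interval (alpha v) #|X :&: nbhd e v|].

Definition uniform (alpha : V -> nat * nat) (T : {set V}) : bool :=
  [forall u in T, forall v in T, alpha u == alpha v].

Definition nu (alpha : V -> nat * nat) (P : {set {set V}}) : nat :=
  #|[set S in P | ~~ uniform alpha S]|.

End Defs.

From mathcomp Require Import all_boot zify.

Set Implicit Arguments.
Unset Strict Implicit.
Unset Printing Implicit Defensive.

(* Two vertices u, v of one type see the same vertices outside {u, v}, so for
   every X the counts |X ∩ N(v)|, v ∈ T, differ by at most one.  If the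
   constraints of T all hold, every such count is therefore at least L - 1 and
   at most U + 1, where L is the largest lower bound and U the smallest upper
   bound occurring on T.  Raising every lower bound on T to L - 1 and lowering
   every upper bound to U + 1 changes no solution, and afterwards a lower bound
   is either L or L - 1 and an upper bound either U or U + 1: the type splits
   into at most four uniform classes. *)

Lemma same_type_card_nbhdI (V : finType) (e : rel V) (u v : V) (X : {set V}) :
  same_type e u v -> #|X :&: nbhd e u| <= (#|X :&: nbhd e v|).+1.
Proof.
move=> /eqP same_uv; rewrite (cardsD1 v) -setIDA same_uv -add1n.
apply: leq_add; first exact: leq_b1.
by apply/subset_leq_card/setIS/subD1set.
Qed.

Lemma near_constant_bounds (V : finType) (A : {pred V}) (l u d : V -> nat)
    (wl wu : V) :
  wl \in A -> wu \in A -> {in A &, forall v w, d v <= (d w).+1} ->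
  {in A, forall v, l v <= d v <= u v} <->
  {in A, forall v, maxn (l v) (l wl).-1 <= d v <= minn (u v) (u wu).+1}.
Proof.
move=> wlA wuA d_near; split=> bounds v vA; last first.
  by move: (bounds v vA); rewrite geq_max leq_min => /andP[/andP[-> _] /andP[-> _]].
move: (bounds v vA) (bounds wl wlA) (bounds wu wuA) => /andP[lv uv] /andP[lwl _].
move=> /andP[_ uwu]; move: (d_near wl v wlA vA) (d_near v wu vA wuA).
rewrite geq_max leq_min; lia.
Qed.

Lemma card_preim_partition (V K : finType) (k : V -> K) (D : {set V}) :
  #|preim_partition k D| <= #|K|.
Proof.
rewrite /preim_partition /equivalence_partition.
pose block p := [set y in D | p == k y].
rewrite (eq_imset (g := block \o k)) // imset_comp.
exact: leq_trans (leq_imset_card _ _) (max_card _).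
Qed.

Lemma uniform_preim_partition (V : finType) (K : eqType) (k : V -> K)
    (alpha : V -> nat * nat) (D S : {set V}) :
  {in D &, forall x y, k x = k y -> alpha x = alpha y} ->
  S \in preim_partition k D -> uniform alpha S.
Proof.
move=> alpha_k /imsetP[x xD ->]; apply/forall_inP => y; rewrite inE.
move=> /andP[yD /eqP kxy]; apply/forall_inP => z; rewrite inE.
by move=> /andP[zD /eqP kxz]; rewrite -(alpha_k _ _ xD yD) ?(alpha_k _ _ xD zD).
Qed.

Lemma eq_in_uniform (V : finType) (alpha beta : V -> nat * nat) (S : {set V}) :
  {in S, alpha =1 beta} -> uniform alpha S = uniform beta S.
Proof.
move=> eq_ab; apply/forall_inP/forall_inP => unifS x xS; apply/forall_inP => y yS.
  by rewrite -!eq_ab //; apply: (forall_inP (unifS x xS)).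
by rewrite !eq_ab //; apply: (forall_inP (unifS x xS)).
Qed.

Lemma nu_replace_lt (V : finType) (alpha beta : V -> nat * nat)
    (P P' : {set {set V}}) (T : {set V}) :
  trivIset P -> T \in P -> ~~ uniform alpha T ->
  {in [predC T], beta =1 alpha} -> {in P', forall S, uniform beta S} ->
  nu beta ((P :\ T) :|: P') < nu alpha P.
Proof.
move=> trivP TP nunifT eq_out unifP'.
have T_nunif : T \in [set S in P | ~~ uniform alpha S] by rewrite inE TP.
rewrite /nu [X in _ < X](cardsD1 T) T_nunif add1n ltnS.
apply/subset_leq_card/subsetP => S; rewrite !inE => /andP[/orP[] SP nunifS].
  case/andP: SP => ST SP; rewrite ST SP /=; apply: contra nunifS.
  have disjST : [disjoint S & T] by apply: (trivIsetP trivP).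
  rewrite (@eq_in_uniform _ alpha beta) // => x xS.
  by rewrite eq_out // inE (disjointFr disjST xS).
by rewrite unifP' in nunifS.
Qed.

Definition interval_of (a b : nat) : nat * nat :=
  if a <= b then (a, b) else empty_interval.

Lemma in_interval_of (a b k : nat) : in_interval (interval_of a b) k = (a <= k <= b).
Proof.
rewrite /interval_of /in_interval /empty_interval; case: (leqP a b) => //= ba.
by apply/idP/idP => /andP[? ?]; lia.
Qed.

Lemma valid_interval_of (V : finType) (a b : nat) :
  b <= #|V| -> valid_interval V (interval_of a b).
Proof.
move=> bV; rewrite /interval_of /valid_interval.
by case: (leqP a b) => [ab | _]; rewrite ?ab ?bV ?eqxx ?orbT.
Qed.

Lemma valid_interval_le (V : finType) (I : nat * nat) :
  valid_interval V I -> I.2 <= #|V|.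
Proof. by case/orP => [/andP[_ ->] | /eqP ->]. Qed.

Section TightenOnType.
Variables (V : finType) (e : rel V) (alpha : V -> nat * nat) (T : {set V}).
Variables (wl wu : V).
Hypotheses (wlT : wl \in T) (wuT : wu \in T).

Let L := (alpha wl).1.
Let U := (alpha wu).2.

Definition tighten_on_type (v : V) : nat * nat :=
  if v \in T then interval_of (maxn (alpha v).1 L.-1) (minn (alpha v).2 U.+1)
  else alpha v.

Lemma tighten_on_type_out : {in [predC T], tighten_on_type =1 alpha}.
Proof. by move=> v; rewrite inE /tighten_on_type => /negbTE ->. Qed.

Lemma llc_tighten_on_type : llc alpha -> llc tighten_on_type.
Proof.
move=> /forallP valid_alpha; apply/forallP => v; rewrite /tighten_on_type.
case: ifP => // _; apply: valid_interval_of.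
exact: leq_trans (geq_minl _ _) (valid_interval_le (valid_alpha v)).
Qed.

Lemma satisfies_tighten_on_type (X : {set V}) :
  {in T &, forall u v, same_type e u v} ->
  satisfies e alpha X = satisfies e tighten_on_type X.
Proof.
move=> sameT; pose d v := #|X :&: nbhd e v|.
have d_near : {in T &, forall v w, d v <= (d w).+1}.
  by move=> v w vT wT; apply/same_type_card_nbhdI/sameT.
have [to_tight from_tight] := near_constant_bounds (fun v => (alpha v).1)
  (fun v => (alpha v).2) wlT wuT d_near.
apply/forallP/forallP => sat v; have [vT | vNT] := boolP (v \in T).
- rewrite /tighten_on_type vT in_interval_of.
  by apply: to_tight vT => w _; apply: sat.
- by rewrite tighten_on_type_out ?inE.
- apply: from_tight vT => w wT.
  by move: (sat w); rewrite /tighten_on_type wT in_interval_of.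
- by rewrite -tighten_on_type_out ?inE.
Qed.

Definition bound_profile (v : V) : bool * bool :=
  ((alpha v).1 == L, (alpha v).2 == U).

Lemma tighten_on_type_profile :
  {in T, forall v, (alpha v).1 <= L} -> {in T, forall v, U <= (alpha v).2} ->
  {in T &, forall x y, bound_profile x = bound_profile y ->
    tighten_on_type x = tighten_on_type y}.
Proof.
move=> leL geU x y xT yT [eq_l eq_u]; rewrite /tighten_on_type xT yT.
by congr interval_of; move: (leL x xT) (leL y yT) (geU x xT) (geU y yT) eq_l eq_u;
  do 2 case: eqP; lia.
Qed.

End TightenOnType.

Theorem mainTheorem10 (V : finType) (e : rel V) (P : {set {set V}})
  (alpha : V -> nat * nat) (T : {set V}) :
  simple_graph e ->
  nbhd_decomposition e P ->
  llc alpha ->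
  T \in P ->
  ~~ uniform alpha T ->
  exists (P' : {set {set V}}) (alpha' : V -> nat * nat),
    [/\ partition P' T,
        llc alpha',
        #|P'| <= 4,
        nu alpha' ((P :\ T) :|: P') < nu alpha P
      & forall X : {set V}, satisfies e alpha X = satisfies e alpha' X].
Proof.
move=> _ /andP[/and3P[_ trivP set0P] typeP] llc_alpha TP nunifT.
have /set0Pn[v0 v0T] : T != set0 by apply: contraNneq set0P => <-.
have [wl wlT leL] := arg_maxnP (fun v => (alpha v).1) v0T.
have [wu wuT geU] := arg_minnP (fun v => (alpha v).2) v0T.
have sameT : {in T &, forall u v, same_type e u v}.
  move=> u v uT vT; move/forall_inP/(_ T TP)/forall_inP/(_ u uT): typeP.
  by move/forall_inP; apply.
pose alpha' := tighten_on_type alpha T wl wu.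
exists (preim_partition (bound_profile alpha wl wu) T), alpha'; split.
- exact: preim_partitionP.
- exact: llc_tighten_on_type.
- by rewrite (leq_trans (card_preim_partition _ _)) // card_prod card_bool.
- apply: nu_replace_lt => // [|S]; first exact: tighten_on_type_out.
  by apply/uniform_preim_partition/tighten_on_type_profile.
- by move=> X; apply: satisfies_tighten_on_type.
Qed.
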